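(* Let $\boldsymbol X=A\times_{\max}\boldsymbol Z$ be a recursive max-linear model on a DAG $\mathcal D=(V,E)$ satisfying Assumptions A, fix any $a>1$, and let $O\subseteq V$ satisfy $\mathrm{An}(O)\cap(V\setminus O)=\emptyset$. For $j\in V\setminus O$, we have $\mathrm{an}(j)\cap(V\setminus O)=\emptyset$ if and only if $$\sigma^2_{M_{i,aj,aO}}-\sigma^2_{M_{i,j,O}}=(a^2-1)\sigma^2_{M_{j,O}}\quad\text{for all } i\in V\setminus(O\cup\{j\}).\qquad(\ast)$$ If $j\in V\setminus O$ has an ancestor in $V\setminus O$, then $\sigma^2_{M_{i,aj,aO}}-\sigma^2_{M_{i,j,O}}\le(a^2-1)\sigma^2_{M_{j,O}}$ for all $i\in V\setminus(O\cup\{j\})$, with strict inequality whenever $i\in (V\setminus O)\cap\mathrm{an}(j)$. Finally, if two distinct nodes $j_1,j_2\in V\setminus O$ both satisfy $(\ast)$, then $j_1\notin\mathrm{an}(j_2)$ and $j_2\notin\mathrm{an}(j_1)$.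
   Context: Let $\mathcal D=(V,E)$ be a directed acyclic graph with $V=\{1,\dots,d\}$; $\mathrm{pa}(i)$, $\mathrm{an}(i)$, $\mathrm{de}(i)$ denote parents, ancestors (nodes with a directed path to $i$) and descendants of $i$, $\mathrm{An}(i)=\mathrm{an}(i)\cup\{i\}$, $\mathrm{An}(U)=\bigcup_{u\in U}\mathrm{An}(u)$; $\vee$ denotes maximum. A recursive max-linear model (RMLM) on $\mathcal D$ is the unique solution of $X_i=\bigvee_{k\in\mathrm{pa}(i)}c_{ik}X_k\vee c_{ii}Z_i$, $i\in V$, with edge weights $c_{ik}>0$ ($k\in \mathrm{pa}(i)$), $c_{ii}>0$; it equals $X_i=(A\times_{\max}\boldsymbol Z)_i=\bigvee_{j\in V}a_{ij}Z_j$ where $a_{ii}=c_{ii}$, $a_{ij}$ for $j\in\mathrm{an}(i)$ is the maximum over all directed paths $j=\ell_0\to\ell_1\to\dots\to\ell_m=i$ of $c_{jj}c_{\ell_1\ell_0}\cdots c_{\ell_m\ell_{m-1}}$, and $a_{ij}=0$ for $j\notin\mathrm{An}(i)$. Assumptions A: (A1) $Z_1,\dots,Z_d$ are independent, nonnegative, atom-free, with $n\,\mathbb P(n^{-1/2}Z_i>z)\to z^{-2}$ as $n\to\infty$ for all $z>0$; (A2) the norm is the Euclidean norm $\|\cdot\|$; (A3) $A$ is standardised, i.e. each row is divided by its Euclidean norm so that $\sum_{j\in V}a_{ij}^2=1$ for all $i$ (the model is taken as $\boldsymbol X=A\times_{\max}\boldsymbol Z$ with this standardised $A$). Under these assumptions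 it is known that $a_{ij}>0$ iff $j\in\mathrm{An}(i)$, and $a_{jj}>a_{ij}$ for all $i\neq j$. Angular measure: with columns $\boldsymbol a_k$ of $A$, $\boldsymbol X$ has angular measure $H_{\boldsymbol X}=\sum_{k\in V}\|\boldsymbol a_k\|^2\delta_{\boldsymbol a_k/\|\boldsymbol a_k\|}$ on $\Theta^{d-1}_+=\{\boldsymbol\omega\in[0,\infty)^d:\|\boldsymbol\omega\|=1\}$. For weights $b_1,\dots,b_d\ge0$, the squared scaling of the max-projection $Y=\bigvee_k b_kX_k$ is $\sigma_Y^2=\int_{\Theta^{d-1}_+}\bigvee_k b_k^2\omega_k^2\,dH_{\boldsymbol X}(\boldsymbol\omega)$. Notation: for $a\ge1$, $O\subseteq V$, $i,j\notin O$: $M_{i,aj,aO}=X_i\vee aX_j\vee\bigvee_{k\in O}aX_k$, $M_{i,j,O}=X_i\vee X_j\vee\bigvee_{k\in O}X_k$, $M_{j,O}=X_j\vee\bigvee_{k\in O}X_k$. *)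

(* scalars in an abstract real closed field R : rcfType
   (needed for Num.sqrt in the Euclidean norms). *)
From mathcomp Require Import all_boot all_order all_algebra.
Set Implicit Arguments.
Unset Strict Implicit.
Unset Printing Implicit Defensive.
Import Order.TTheory GRing.Theory Num.Theory.
Local Open Scope ring_scope.

Section RMLM.
Variable R : rcfType.
Variable d : nat.
Notation V := 'I_d.

(* A DAG on V = 'I_d: E k i means the directed edge k -> i. *)
Definition acyclic (E : rel V) : Prop := forall k i, E k i -> ~~ connect E i k.

(* An(i) = an(i) ∪ {i} : nodes with a (possibly empty) directed path to i. *)
Definition Anc (E : rel V) (i : V) : {set V} := [set k | connect E k i].
Definition anc (E : rel V) (i : V) : {set V} := [set k | (k != i) && connect E k i].

(* weight of the directed path j = l0 -> l1 -> ... -> lm (p = [l1;...;lm]):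
   c_jj * c_{l1 l0} * ... * c_{lm l(m-1)} *)
Definition path_weight (c : V -> V -> R) (j : V) (p : seq V) : R :=
  c j j * \prod_(e <- zip (j :: p) p) c e.2 e.1.

(* Unstandardised max-linear coefficient matrix: a_ij = maximum of path weights
   over all directed paths from j to i (paths in a DAG on d nodes have fewer
   than d edges); 0 if there is no such path. *)
Definition pathmax (E : rel V) (c : V -> V -> R) (i j : V) : R :=
  \big[Num.max/0]_(n < d)
    \big[Num.max/0]_(p : n.-tuple V | path E j p && (last j p == i))
      path_weight c j p.

Definition standardise (A : V -> V -> R) (i j : V) : R :=
  A i j / Num.sqrt (\sum_(k : V) A i k ^+ 2).

Definition colnorm (A : V -> V -> R) (k : V) : R :=
  Num.sqrt (\sum_(l : V) A l k ^+ 2).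

(* sigma^2 of the max-projection Y = \/_l b_l X_l, i.e. the integral of
   \/_l b_l^2 w_l^2 against H_X = sum_k ||a_k||^2 delta_{a_k/||a_k||}. *)
Definition sigma2 (A : V -> V -> R) (b : V -> R) : R :=
  \sum_(k : V) colnorm A k ^+ 2 *
     \big[Num.max/0]_(l : V) (b l ^+ 2 * (A l k / colnorm A k) ^+ 2).

(* weights of M_{i,aj,aO} = X_i \/ a X_j \/ \/_{k in O} a X_k *)
Definition w_i_aj_aO (a : R) (i j : V) (O : {set V}) (l : V) : R :=
  if l == i then 1 else if (l == j) || (l \in O) then a else 0.
Definition w_i_j_O (i j : V) (O : {set V}) (l : V) : R :=
  if (l == i) || (l == j) || (l \in O) then 1 else 0.
Definition w_j_O (j : V) (O : {set V}) (l : V) : R :=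
  if (l == j) || (l \in O) then 1 else 0.

Definition star_cond (A : V -> V -> R) (a : R) (O : {set V}) (j : V) : Prop :=
  forall i : V, i \notin O -> i != j ->
    sigma2 A (w_i_aj_aO a i j O) - sigma2 A (w_i_j_O i j O)
      = (a ^+ 2 - 1) * sigma2 A (w_j_O j O).

End RMLM.

Arguments w_i_j_O {R d} i j O l.
Arguments w_j_O {R d} j O l.

From mathcomp Require Import all_boot all_order all_algebra ring lra.
Import Order.TTheory GRing.Theory Num.Theory.
Set Implicit Arguments.
Unset Strict Implicit.
Unset Printing Implicit Defensive.
Local Open Scope ring_scope.

(* Once the column norms cancel, sigma^2 of the max-projection with weights b
   is sum_k max_l b_l^2 a_lk^2.  For i outside O u {j}, the defect
   (a^2-1) sigma^2(M_{j,O}) - (sigma^2(M_{i,aj,aO}) - sigma^2(M_{i,j,O}))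
   is therefore a sum over the columns k of g(a_ik^2, m_k), where
   m_k = max_{l in {j} u O} a_lk^2 and
   g(u, m) = (a^2-1) m - (max(u, a^2 m) - max(u, m)).
   This gap is nonnegative, vanishes when u <= m or m = 0, and is positive
   when 0 < m < u.  If j has no ancestor outside the ancestral set O, then
   every column k either lies in {j} u O, where the diagonal dominance
   a_kk > a_ik gives u <= m, or has m_k = 0.  Conversely, for an ancestor
   i of j outside O the column i has m_i = a_ji^2 with 0 < a_ji < a_ii, so
   the gap there is strict. *)

Section BigMax0.
Variable R : realDomainType.

Lemma bigmax0_pMr (I : Type) (r : seq I) (P : pred I) (F : I -> R) c :
  0 <= c ->
  \big[Num.max/0]_(i <- r | P i) (c * F i)
    = c * \big[Num.max/0]_(i <- r | P i) F i.
Proof.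
move=> c0; elim/big_rec2: _ => [|i y1 y2 _ ->]; first by rewrite mulr0.
by rewrite maxr_pMr.
Qed.

Lemma bigmax0_indicator (I : finType) (P : pred I) (S : {pred I}) (F : I -> R) u :
  0 <= u ->
  \big[Num.max/0]_(i | P i) ((if i \in S then u else 0) * F i)
    = u * \big[Num.max/0]_(i | P i && (i \in S)) F i.
Proof.
move=> u0; rewrite -bigmax0_pMr // bigmax_mkcondr.
by apply: eq_bigr => i _; case: ifP; rewrite ?mul0r.
Qed.

Lemma bigmax0_two_level (I : finType) (i : I) (S : {pred I}) (F : I -> R) u :
  i \notin S -> 0 <= u ->
  \big[Num.max/0]_l ((if l == i then 1 else if l \in S then u else 0) * F l)
    = Num.max (F i) (u * \big[Num.max/0]_(l in S) F l).
Proof.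
move=> iS u0; rewrite (bigmaxD1 i) // eqxx mul1r.
rewrite (eq_bigr (fun l => (if l \in S then u else 0) * F l)); last first.
  by move=> l /negbTE ->.
rewrite bigmax0_indicator //; congr (Num.max _ (u * _)).
by apply: eq_bigl => l /=; case: eqP => // ->; rewrite (negbTE iS).
Qed.

End BigMax0.

Section MaxGap.
Variable R : realDomainType.
Implicit Types c u m : R.

Definition maxgap c u m := (c - 1) * m - (Num.max u (c * m) - Num.max u m).

Lemma maxgap_ge0 c u m : 1 <= c -> 0 <= m -> 0 <= maxgap c u m.
Proof.
move=> c1 m0; have : m <= c * m by rewrite ler_peMl.
by rewrite /maxgap !maxEle; case: ifP; case: ifP; lra.
Qed.

Lemma maxgap_eq0 c u m : 1 <= c -> 0 <= m -> u <= m -> maxgap c u m = 0.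
Proof.
move=> c1 m0 um; have mcm : m <= c * m by rewrite ler_peMl.
by rewrite /maxgap !maxEle um (le_trans um mcm); lra.
Qed.

Lemma maxgap0 c u : maxgap c u 0 = 0.
Proof. by rewrite /maxgap !mulr0 subrr subr0. Qed.

Lemma maxgap_gt0 c u m : 1 < c -> 0 < m -> m < u -> 0 < maxgap c u m.
Proof.
move=> c1 m0 mu; have : m < c * m by rewrite ltr_pMl.
by rewrite /maxgap !maxEle; case: ifP; case: ifP; lra.
Qed.

End MaxGap.

Section MaxProjections.
Variable R : rcfType.
Variable d : nat.
Notation V := 'I_d.
Variable A : V -> V -> R.
Hypothesis A_diag_neq0 : forall k, A k k != 0.

Lemma colnorm_gt0 k : 0 < colnorm A k.
Proof.
rewrite sqrtr_gt0 (bigD1 k) //=; apply: ltr_pwDl.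
  by rewrite exprn_even_gt0 ?A_diag_neq0 ?orbT.
by rewrite sumr_ge0 // => l _; exact: sqr_ge0.
Qed.

Lemma sigma2E b :
  sigma2 A b = \sum_k \big[Num.max/0]_l (b l ^+ 2 * A l k ^+ 2).
Proof.
apply: eq_bigr => k _; have nk := colnorm_gt0 k.
rewrite (eq_bigr (fun l => (colnorm A k ^+ 2)^-1 * (b l ^+ 2 * A l k ^+ 2))).
  by rewrite bigmax0_pMr ?invr_ge0 ?exprn_ge0 ?ltW // mulVKf // expf_neq0 ?gt_eqF.
by move=> l _; rewrite expr_div_n mulrA mulrC.
Qed.

Definition colmax (S : {set V}) k := \big[Num.max/0]_(l in S) A l k ^+ 2.

Variables (O : {set V}) (a : R).

Lemma sigma2_M_jO j : sigma2 A (w_j_O j O) = \sum_k colmax (j |: O) k.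
Proof.
rewrite sigma2E; apply: eq_bigr => k _.
rewrite (eq_bigr (fun l => (if l \in j |: O then 1 else 0) * A l k ^+ 2)).
  by rewrite bigmax0_indicator ?mul1r.
by move=> l _; rewrite /w_j_O in_setU1; case: ifP; rewrite ?expr1n ?expr0n.
Qed.

Lemma sigma2_M_ijO i j : i \notin j |: O ->
  sigma2 A (w_i_j_O i j O) = \sum_k Num.max (A i k ^+ 2) (colmax (j |: O) k).
Proof.
move=> iS; rewrite sigma2E; apply: eq_bigr => k _.
rewrite (eq_bigr (fun l =>
  (if l == i then 1 else if l \in j |: O then 1 else 0) * A l k ^+ 2)).
  by rewrite bigmax0_two_level ?mul1r.
move=> l _; rewrite /w_i_j_O in_setU1.
by case: (l == i); case: (l == j); case: (l \in O); rewrite ?expr1n ?expr0n.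
Qed.

Lemma sigma2_M_iajaO i j : i \notin j |: O ->
  sigma2 A (w_i_aj_aO a i j O)
    = \sum_k Num.max (A i k ^+ 2) (a ^+ 2 * colmax (j |: O) k).
Proof.
move=> iS; rewrite sigma2E; apply: eq_bigr => k _.
rewrite (eq_bigr (fun l =>
  (if l == i then 1 else if l \in j |: O then a ^+ 2 else 0) * A l k ^+ 2)).
  by rewrite bigmax0_two_level ?sqr_ge0.
move=> l _; rewrite /w_i_aj_aO in_setU1.
by case: (l == i); case: (l == j); case: (l \in O); rewrite ?expr1n ?expr0n.
Qed.

Lemma star_gapE i j : i \notin j |: O ->
  (a ^+ 2 - 1) * sigma2 A (w_j_O j O)
    - (sigma2 A (w_i_aj_aO a i j O) - sigma2 A (w_i_j_O i j O))
  = \sum_k maxgap (a ^+ 2) (A i k ^+ 2) (colmax (j |: O) k).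
Proof.
move=> iS; rewrite sigma2_M_jO sigma2_M_iajaO // sigma2_M_ijO //.
by rewrite mulr_sumr -!sumrB.
Qed.

Hypothesis a_gt1 : 1 < a.

Let a2_gt1 : 1 < a ^+ 2. Proof. by rewrite exprn_egt1. Qed.

Let maxgap_col_ge0 i j k :
  0 <= maxgap (a ^+ 2) (A i k ^+ 2) (colmax (j |: O) k).
Proof. by apply: maxgap_ge0; [exact: ltW a2_gt1 | exact: bigmax_ge_id]. Qed.

Lemma star_diff_le i j : i \notin j |: O ->
  sigma2 A (w_i_aj_aO a i j O) - sigma2 A (w_i_j_O i j O)
    <= (a ^+ 2 - 1) * sigma2 A (w_j_O j O).
Proof.
move=> iS; rewrite -subr_ge0 star_gapE //.
by apply: sumr_ge0 => k _; exact: maxgap_col_ge0.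
Qed.

Lemma star_diff_lt i j k : i \notin j |: O ->
  0 < maxgap (a ^+ 2) (A i k ^+ 2) (colmax (j |: O) k) ->
  sigma2 A (w_i_aj_aO a i j O) - sigma2 A (w_i_j_O i j O)
    < (a ^+ 2 - 1) * sigma2 A (w_j_O j O).
Proof.
move=> iS gap_k; rewrite -subr_gt0 star_gapE // (bigD1 k) //=.
by rewrite ltr_pwDl // sumr_ge0 // => l _; exact: maxgap_col_ge0.
Qed.

Lemma star_diff_eq i j : i \notin j |: O ->
  (forall k, maxgap (a ^+ 2) (A i k ^+ 2) (colmax (j |: O) k) = 0) ->
  sigma2 A (w_i_aj_aO a i j O) - sigma2 A (w_i_j_O i j O)
    = (a ^+ 2 - 1) * sigma2 A (w_j_O j O).
Proof.
by move=> iS gap0; apply/eqP; rewrite eq_sym -subr_eq0 star_gapE // big1.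
Qed.

End MaxProjections.

Section AncestralSets.
Variable R : rcfType.
Variable d : nat.
Notation V := 'I_d.
Variable E : rel V.
Variable A : V -> V -> R.
Hypothesis A_ge0 : forall l k, 0 <= A l k.
Hypothesis A_gt0 : forall l k, (0 < A l k) = connect E k l.
Hypothesis A_lt_diag : forall l k, l != k -> A l k < A k k.
Variable O : {set V}.
Hypothesis O_ancestral : forall l, l \in O -> Anc E l \subset O.
Variable a : R.
Hypothesis a_gt1 : 1 < a.

Let A_diag_neq0 k : A k k != 0.
Proof. by rewrite gt_eqF // A_gt0 connect0. Qed.

Lemma nconnect_A_eq0 l k : ~~ connect E k l -> A l k = 0.
Proof. by rewrite -A_gt0 lt_neqAle A_ge0 andbT negbK => /eqP. Qed.

Lemma connect_memO k l : l \in O -> connect E k l -> k \in O.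
Proof. by move=> lO ckl; apply: (subsetP (O_ancestral lO)); rewrite inE. Qed.

Lemma colmax_ge_sq (S : {set V}) i k : k \in S -> i \notin S ->
  A i k ^+ 2 <= colmax A S k.
Proof.
move=> kS iS; have ik : i != k by apply: contraNneq iS => ->.
by apply: bigmax_sup kS _; rewrite ltW // ltrXn2r ?A_lt_diag.
Qed.

Lemma colmax_eq0 (S : {set V}) k : (forall l, l \in S -> ~~ connect E k l) ->
  colmax A S k = 0.
Proof.
by move=> nc; apply: bigmax_eq_id => l /nc /nconnect_A_eq0 ->; rewrite expr0n.
Qed.

Lemma noanc_star_cond j : anc E j :&: ~: O = set0 -> star_cond A a O j.
Proof.
move=> noanc i iO ij; have iS : i \notin j |: O by rewrite in_setU1 negb_or ij.
apply: star_diff_eq => // k.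
have [kS|kS] := boolP (k \in j |: O).
  apply: maxgap_eq0; [exact: exprn_ege1 (ltW a_gt1) | exact: bigmax_ge_id |].
  exact: colmax_ge_sq.
rewrite colmax_eq0 ?maxgap0 // => l; move: kS; rewrite !in_setU1 negb_or.
case/andP=> kj kO /orP [/eqP -> | lO].
  apply/negP => ckj; have : k \in anc E j :&: ~: O by rewrite !inE kj ckj.
  by rewrite noanc inE.
by apply: contraNN kO; exact: connect_memO.
Qed.

Lemma colmax_notin_O i j : i \notin O -> colmax A (j |: O) i = A j i ^+ 2.
Proof.
move=> iO; rewrite /colmax bigmaxU bigmax_set1 (bigmax_eq_id _ (x := 0)).
  by rewrite !(max_idPl (sqr_ge0 (A j i))).
move=> l lO; rewrite nconnect_A_eq0 ?expr0n //.
by apply: contraNN iO; exact: connect_memO.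
Qed.

Lemma maxgap_anc_gt0 i j : i \notin O -> i \in anc E j ->
  0 < maxgap (a ^+ 2) (A i i ^+ 2) (colmax A (j |: O) i).
Proof.
rewrite inE => iO /andP [ij cij]; rewrite colmax_notin_O //.
apply: maxgap_gt0; first by rewrite exprn_egt1.
  by rewrite exprn_gt0 // A_gt0.
by rewrite ltrXn2r // A_lt_diag // eq_sym.
Qed.

Lemma star_diff_lt_anc i j : i \notin O -> i \in anc E j ->
  sigma2 A (w_i_aj_aO a i j O) - sigma2 A (w_i_j_O i j O)
    < (a ^+ 2 - 1) * sigma2 A (w_j_O j O).
Proof.
move=> iO ianc; have iS : i \notin j |: O.
  by move: ianc; rewrite inE in_setU1 negb_or iO andbT => /andP [].
by apply: (star_diff_lt A_diag_neq0 a_gt1 iS); exact: maxgap_anc_gt0.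
Qed.

Lemma star_cond_noanc j : star_cond A a O j -> anc E j :&: ~: O = set0.
Proof.
move=> st; apply/setP => k; rewrite in_setI in_setC in_set0.
apply/negbTE/negP => /andP [kanc kO]; have := star_diff_lt_anc kO kanc.
by move: kanc; rewrite inE => /andP [kj _]; rewrite st ?ltxx.
Qed.

Lemma star_cond_notin_anc j k : k \notin O -> star_cond A a O j ->
  k \notin anc E j.
Proof.
move=> kO /star_cond_noanc /setP /(_ k).
by rewrite in_setI in_setC in_set0 kO andbT => ->.
Qed.

Lemma star_cond_ancestral :
  (forall j, j \notin O ->
     (anc E j :&: ~: O = set0 <-> star_cond A a O j)) /\
  (forall j, j \notin O -> anc E j :&: ~: O != set0 ->
     forall i, i \notin O -> i != j ->
       sigma2 A (w_i_aj_aO a i j O) - sigma2 A (w_i_j_O i j O)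
         <= (a ^+ 2 - 1) * sigma2 A (w_j_O j O)
       /\ (i \in anc E j ->
       sigma2 A (w_i_aj_aO a i j O) - sigma2 A (w_i_j_O i j O)
         < (a ^+ 2 - 1) * sigma2 A (w_j_O j O))) /\
  (forall j1 j2, j1 \notin O -> j2 \notin O -> j1 != j2 ->
     star_cond A a O j1 -> star_cond A a O j2 ->
     j1 \notin anc E j2 /\ j2 \notin anc E j1).
Proof.
split; [|split].
- by move=> j _; split; [exact: noanc_star_cond | exact: star_cond_noanc].
- move=> j _ _ i iO ij; split; last exact: star_diff_lt_anc.
  by apply: star_diff_le => //; rewrite in_setU1 negb_or ij.
- by move=> j1 j2 j1O j2O _ st1 st2; split; apply: star_cond_notin_anc.
Qed.

End AncestralSets.

Section Standardise.
Variable R : rcfType.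
Variable d : nat.
Notation V := 'I_d.
Variable P : V -> V -> R.
Hypothesis P_ge0 : forall l k, 0 <= P l k.
Hypothesis P_diag_gt0 : forall k, 0 < P k k.

Let rowsq_gt0 l : 0 < \sum_k P l k ^+ 2.
Proof.
rewrite (bigD1 l) //=; apply: ltr_pwDl; first by rewrite exprn_gt0.
by rewrite sumr_ge0 // => k _; exact: sqr_ge0.
Qed.

Let rownorm_gt0 l : 0 < Num.sqrt (\sum_k P l k ^+ 2).
Proof. by rewrite sqrtr_gt0. Qed.

Lemma standardise_ge0 l k : 0 <= standardise P l k.
Proof. by rewrite divr_ge0 ?sqrtr_ge0. Qed.

Lemma standardise_gt0 l k : (0 < standardise P l k) = (0 < P l k).
Proof. by rewrite pmulr_lgt0 ?invr_gt0. Qed.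

Lemma standardise_lt_diag l k : l != k -> P k l = 0 ->
  (forall t, P l k * P k t <= P k k * P l t) ->
  standardise P l k < standardise P k k.
Proof.
move=> lk Pkl Pmul.
(* Compare squares: the summand t = l is strict because P k l = 0. *)
rewrite /standardise ltr_pdivrMr // mulrAC ltr_pdivlMr //.
rewrite -(ltr_pXn2r (n := 2)) // ?nnegrE ?mulr_ge0 ?sqrtr_ge0 //.
rewrite !exprMn !sqr_sqrtr ?ltW // !mulr_sumr.
rewrite (bigD1 l) //= [X in _ < X](bigD1 l) //=.
apply: ltr_leD.
  by rewrite Pkl expr0n mulr0 mulr_gt0 ?exprn_gt0.
apply: ler_sum => t _; rewrite -!exprMn lerXn2r ?nnegrE ?mulr_ge0 //.
Qed.

End Standardise.

Section Pathmax.
Variable R : rcfType.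
Variable d : nat.
Notation V := 'I_d.
Variable E : rel V.
Variable c : V -> V -> R.
Hypothesis E_acyclic : acyclic E.
Hypothesis c_edge_gt0 : forall k i, E k i -> 0 < c i k.
Hypothesis c_diag_gt0 : forall i, 0 < c i i.

Notation P := (pathmax E c).

Lemma acyclic_path_uniq x s : path E x s -> uniq (x :: s).
Proof.
elim: s x => [|y s IH] x //= /andP [exy ys].
have /= -> := IH y ys; rewrite andbT; apply/negP => /(path_connect ys) cyx.
by move/negP: (E_acyclic exy).
Qed.

Lemma acyclic_path_size x s : path E x s -> (size s < d)%N.
Proof.
move=> /acyclic_path_uniq /card_uniqP size_xs.
by have := max_card (mem (x :: s)); rewrite card_ord size_xs.
Qed.

Lemma connect_antisym x y : connect E x y -> connect E y x -> x = y.
Proof.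
move=> /connectP [[|z s] //= /andP [exz zs] ->] cyx.
have := connect_trans (path_connect zs (mem_last z s)) cyx.
by move/negP: (E_acyclic exz).
Qed.

Lemma path_weight_gt0 j p : path E j p -> 0 < path_weight c j p.
Proof.
rewrite /path_weight => jp; rewrite mulr_gt0 //.
elim: p j jp => [|y s IH] j /=; first by rewrite big_nil.
by case/andP=> ejy ys; rewrite big_cons mulr_gt0 ?c_edge_gt0 ?IH.
Qed.

Lemma zip_cons_cat (x : V) (q p : seq V) :
  zip (x :: q ++ p) (q ++ p) = zip (x :: q) q ++ zip (last x q :: p) p.
Proof. by elim: q x => [|y q IH] x //=; rewrite IH. Qed.

Lemma path_weight_cat t q p :
  c (last t q) (last t q) * path_weight c t (q ++ p)
    = path_weight c t q * path_weight c (last t q) p.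
Proof. by rewrite /path_weight zip_cons_cat big_cat /=; ring. Qed.

Lemma pathmax_ge0 i j : 0 <= P i j.
Proof. exact: bigmax_ge_id. Qed.

Lemma pathmax_ge_weight j p : path E j p -> path_weight c j p <= P (last j p) j.
Proof.
move=> jp; pose n := Ordinal (acyclic_path_size jp).
apply: (bigmax_sup n) => //.
apply: (@le_bigmax_cond _ _ _ 0 (in_tuple p) _
  (fun t : n.-tuple V => path_weight c j t)).
by rewrite /= jp eqxx.
Qed.

Lemma pathmax_diag_ge k : c k k <= P k k.
Proof.
by have := @pathmax_ge_weight k [::] erefl; rewrite /path_weight big_nil mulr1.
Qed.

Lemma pathmax_mulr_le i j x y : 0 <= x -> 0 <= y ->
  (forall p, path E j p -> last j p = i -> path_weight c j p * x <= y) ->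
  P i j * x <= y.
Proof.
move=> x0 y0 le_y; rewrite mulrC -bigmax0_pMr //; apply: bigmax_le => // n _.
rewrite -bigmax0_pMr //; apply: bigmax_le => // p /andP [jp /eqP lp].
by rewrite mulrC le_y.
Qed.

Lemma pathmax_gt0 i j : (0 < P i j) = connect E j i.
Proof.
apply/idP/idP => [|/connectP [p jp ->]].
  apply: contraLR => nji; rewrite -leNgt -[P i j]mulr1.
  apply: pathmax_mulr_le => // p jp lp; case/negP: nji.
  by apply/connectP; exists p.
exact: lt_le_trans (path_weight_gt0 jp) (pathmax_ge_weight jp).
Qed.

Lemma pathmax_mul_le l k t : P l k * P k t <= P k k * P l t.
Proof.
have Y0 : 0 <= c k k * P l t by rewrite mulr_ge0 ?pathmax_ge0 ?ltW.
apply: le_trans (ler_wpM2r (pathmax_ge0 _ _) (pathmax_diag_ge k)).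
apply: pathmax_mulr_le => [||p kp lp]; [exact: pathmax_ge0 | exact: Y0 |].
rewrite mulrC; apply: pathmax_mulr_le => [||q tq lq]; [| exact: Y0 |].
  exact: ltW (path_weight_gt0 kp).
subst l k; rewrite -path_weight_cat -last_cat ler_pM2l //.
by rewrite pathmax_ge_weight // cat_path tq kp.
Qed.

Lemma pathmax_diag_gt0 k : 0 < P k k.
Proof. by rewrite pathmax_gt0 connect0. Qed.

Lemma standardise_pathmax_gt0 l k : (0 < standardise P l k) = connect E k l.
Proof. by rewrite standardise_gt0 ?pathmax_gt0 //; exact: pathmax_diag_gt0. Qed.

Lemma standardise_pathmax_lt_diag l k : l != k ->
  standardise P l k < standardise P k k.
Proof.
move=> lk; have [ckl|nckl] := boolP (connect E k l); last first.
  apply: (@le_lt_trans _ _ 0); last by rewrite standardise_pathmax_gt0 connect0.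
  by rewrite leNgt standardise_pathmax_gt0.
apply: standardise_lt_diag => //; [exact: pathmax_ge0 | exact: pathmax_diag_gt0 | |].
  apply/eqP; rewrite eq_le pathmax_ge0 andbT leNgt pathmax_gt0.
  by apply: contra lk => clk; rewrite (connect_antisym ckl clk).
exact: pathmax_mul_le.
Qed.

End Pathmax.

Theorem theorem4p2 (R : rcfType) (d : nat) (E : rel 'I_d)
  (c : 'I_d -> 'I_d -> R)
  (hdag : acyclic E)
  (hedge : forall k i, E k i -> 0 < c i k)
  (hdiag : forall i, 0 < c i i)
  (a : R) (ha : 1 < a)
  (O : {set 'I_d})
  (hO : forall l, l \in O -> Anc E l \subset O) :
  let A := standardise (pathmax E c) in
  (forall j, j \notin O ->
     (anc E j :&: ~: O = set0 <-> star_cond A a O j)) /\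
  (forall j, j \notin O -> anc E j :&: ~: O != set0 ->
     forall i, i \notin O -> i != j ->
       sigma2 A (w_i_aj_aO a i j O) - sigma2 A (w_i_j_O i j O)
         <= (a ^+ 2 - 1) * sigma2 A (w_j_O j O)
       /\ (i \in anc E j ->
       sigma2 A (w_i_aj_aO a i j O) - sigma2 A (w_i_j_O i j O)
         < (a ^+ 2 - 1) * sigma2 A (w_j_O j O))) /\
  (forall j1 j2, j1 \notin O -> j2 \notin O -> j1 != j2 ->
     star_cond A a O j1 -> star_cond A a O j2 ->
     j1 \notin anc E j2 /\ j2 \notin anc E j1).
Proof.
move=> A; apply: star_cond_ancestral => //.
- by move=> l k; apply: standardise_ge0 => ? ?; exact: pathmax_ge0.
- exact: standardise_pathmax_gt0.
- exact: standardise_pathmax_lt_diag.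
Qed.
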